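(* Let $H$ be a Hopf algebra over a field $k$. For all $x,y\in H$, the elements $p_x=t_{x_1}t_{S(x_2)}$ and $q_{x,y}=t_{x_1}t_{y_1}t_{S(x_2y_2)}$ of $S(t_H)$, identified with $p_x\otimes1$ and $q_{x,y}\otimes1$ in $S(t_H)\otimes H$, belong to $\bar\mu(\mathcal{V}_H)$.
   Context: Sweedler notation $\Delta(x)=x_1\otimes x_2$; $S$ is the antipode of $H$. Let $t_H=\{t_x:x\in H\}$ be a copy of the vector space $H$ ($x\mapsto t_x$ linear) and $S(t_H)$ its symmetric algebra. Let $X_H=\{X_x:x\in H\}$ be another copy of $H$ and $T(X_H)$ the tensor algebra, a right $H$-comodule algebra via $\delta_T(X_x)=X_{x_1}\otimes x_2$. Give $S(t_H)\otimes H$ the right $H$-comodule algebra structure $\mathrm{id}\otimes\Delta$. Let $\mu:T(X_H)\to S(t_H)\otimes H$ be the algebra map with $\mu(X_x)=t_{x_1}\otimes x_2$ (an $H$-comodule algebra map), $I_H=\ker\mu$, $\mathcal{U}_H=T(X_H)/I_H$ (the universal $H$-comodule algebra), $\bar\mu:\mathcal{U}_H\hookrightarrow S(t_H)\otimes H$ the induced injection, and $\mathcal{V}_H=\{u\in\mathcal{U}_H:\delta(u)=u\otimes1\}$ its subalgebra of right $H$-coinvariants. *)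

From HB Require Import structures.
From mathcomp Require Import all_boot all_order all_algebra.
From mathcomp Require Import finmap.
From mathcomp.multinomials Require Import monalg.

Set Implicit Arguments.
Unset Strict Implicit.
Unset Printing Implicit Defensive.

Import GRing.Theory.
Local Open Scope ring_scope.

(* A vector space with basis J over k is modelled as the
   free k-module {malg k[J]} (finitely supported functions J -> k).
   The tensor product of free modules with bases J and L is the free module
   with basis J * L.  A Hopf algebra H over k is given by a basis I of its
   underlying vector space (H := {malg k[I]}) and the values of its structure
   maps on basis vectors, subject to the Hopf algebra axioms. *)

Section FreeModules.
Context {k : fieldType}.

Definition bv {J : choiceType} (j : J) : {malg k[J]} := << (1 : k) *g j >>.

Definition ext {J : choiceType} {W : lmodType k} (f : J -> W)
  (v : {malg k[J]}) : W := \sum_(j <- msupp v) v@_j *: f j.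

Definition tens {J L : choiceType} (a : {malg k[J]}) (b : {malg k[L]})
  : {malg k[(J * L)%type]} := ext (fun j => ext (fun l => bv (j, l)) b) a.

Definition tmap {J L J' L' : choiceType}
  (f : {malg k[J]} -> {malg k[J']}) (g : {malg k[L]} -> {malg k[L']})
  (w : {malg k[(J * L)%type]}) : {malg k[(J' * L')%type]} :=
  ext (fun p => tens (f (bv p.1)) (g (bv p.2))) w.

Definition relabel {J L : choiceType} (h : J -> L) (v : {malg k[J]})
  : {malg k[L]} := ext (fun j => bv (h j)) v.

End FreeModules.

Record HopfData (k : fieldType) (I : choiceType) := {
  hm : I -> I -> {malg k[I]};
  h1 : {malg k[I]};
  hD : I -> {malg k[(I * I)%type]};
  he : I -> k;
  hS : I -> {malg k[I]}
}.

Section Hopf.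
Variables (k : fieldType) (I : choiceType) (A : HopfData k I).

Definition mulH (x y : {malg k[I]}) : {malg k[I]} :=
  ext (fun i => ext (fun j => hm A i j) y) x.
Definition comul (x : {malg k[I]}) : {malg k[(I * I)%type]} := ext (hD A) x.
Definition counit (x : {malg k[I]}) : k := \sum_(i <- msupp x) x@_i * he A i.
Definition antip (x : {malg k[I]}) : {malg k[I]} := ext (hS A) x.

Definition mulHH (u v : {malg k[(I * I)%type]}) : {malg k[(I * I)%type]} :=
  ext (fun p => ext (fun q =>
     tens (mulH (bv p.1) (bv q.1)) (mulH (bv p.2) (bv q.2))) v) u.
Definition multH (w : {malg k[(I * I)%type]}) : {malg k[I]} :=
  ext (fun p => mulH (bv p.1) (bv p.2)) w.
Definition counit_l (w : {malg k[(I * I)%type]}) : {malg k[I]} :=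
  ext (fun p => he A p.1 *: bv p.2) w.
Definition counit_r (w : {malg k[(I * I)%type]}) : {malg k[I]} :=
  ext (fun p => he A p.2 *: bv p.1) w.
Definition assoc3 (p : (I * I) * I) : I * (I * I) := (p.1.1, (p.1.2, p.2)).

Definition is_hopf : Prop :=
  (
      (forall x y z, mulH (mulH x y) z = mulH x (mulH y z)) /\
      (forall x, mulH (h1 A) x = x /\ mulH x (h1 A) = x) /\
      (forall x, relabel assoc3 (tmap comul id (comul x))
                 = tmap id comul (comul x)) /\
      (forall x, counit_l (comul x) = x /\ counit_r (comul x) = x) /\
      ((forall x y, comul (mulH x y) = mulHH (comul x) (comul y))
        /\ comul (h1 A) = tens (h1 A) (h1 A)) /\
      ((forall x y, counit (mulH x y) = counit x * counit y)
        /\ counit (h1 A) = 1) /\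
      (forall x, multH (tmap antip id (comul x)) = counit x *: h1 A
              /\ multH (tmap id antip (comul x)) = counit x *: h1 A)).

Definition mulMH {M : monomType} (u v : {malg k[(M * I)%type]}) : {malg k[(M * I)%type]} :=
  ext (fun p => ext (fun q =>
     tens ((bv p.1 : {malg k[M]}) * bv q.1) (mulH (bv p.2) (bv q.2))) v) u.
Definition oneMH {M : monomType} : {malg k[(M * I)%type]} :=
  tens (1 : {malg k[M]}) (h1 A).

(* S(t_H) = symmetric algebra on the copy t_H of H *)
Definition SymH := {malg k[{cmonom I}]}.
Definition tvar (x : {malg k[I]}) : SymH := ext (fun i => bv (ucm i)) x.
(* T(X_H) = tensor algebra on the copy X_H of H *)
Definition TensH := {malg k[{fmonom I}]}.
Definition Xvar (x : {malg k[I]}) : TensH := ext (fun i => bv (fmu i)) x.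

(* mu : T(X_H) -> S(t_H) (x) H, the algebra map with
   mu(X_x) = t_{x_1} (x) x_2 *)
Definition muX (x : {malg k[I]}) : {malg k[({cmonom I} * I)%type]} :=
  tmap tvar id (comul x).
Definition mu (w : TensH) : {malg k[({cmonom I} * I)%type]} :=
  ext (fun m : {fmonom I} =>
         foldr mulMH oneMH [seq muX (bv i) | i <- fmonom_val m]) w.

(* delta_T : T(X_H) -> T(X_H) (x) H, the algebra map with
   delta_T(X_x) = X_{x_1} (x) x_2 *)
Definition deltaX (x : {malg k[I]}) : {malg k[({fmonom I} * I)%type]} :=
  tmap Xvar id (comul x).
Definition deltaT (w : TensH) : {malg k[({fmonom I} * I)%type]} :=
  ext (fun m : {fmonom I} =>
         foldr mulMH oneMH [seq deltaX (bv i) | i <- fmonom_val m]) w.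

(* The class of w in U_H = T(X_H)/ker mu is right H-coinvariant:
   delta(pi w) = pi w (x) 1 in U_H (x) H; this is tested after applying
   the injective map mubar (x) id : U_H (x) H -> (S(t_H) (x) H) (x) H. *)
Definition coinvT (w : TensH) : Prop :=
  tmap mu id (deltaT w) = tens (mu w) (h1 A).

Definition in_mubar_VH (v : {malg k[({cmonom I} * I)%type]}) : Prop :=
  exists w : TensH, coinvT w /\ mu w = v.

Definition p_el (x : {malg k[I]}) : SymH :=
  ext (fun q : I * I => tvar (bv q.1) * tvar (antip (bv q.2))) (comul x).
Definition q_el (x y : {malg k[I]}) : SymH :=
  ext (fun q1 : I * I => ext (fun q2 : I * I =>
     tvar (bv q1.1) * tvar (bv q2.1)
       * tvar (antip (mulH (bv q1.2) (bv q2.2)))) (comul y)) (comul x).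

End Hopf.

(* For a linear map g : H -> R into a monoid algebra R, put
   F_g(a) = g(a_1) (x) a_2 in R (x) H.  Both mu and delta_T are the algebra maps
   out of T(X_H) extending such an F_g, with g = t resp. g = X.  The antipode
   satisfies Delta(S z) = S z_2 (x) S z_1, whence the absorption identity
     (s (x) z_1) F_g(S z_2) = s g(S z) (x) 1.
   Together with coassociativity (and Delta(xy) = Delta(x) Delta(y) for q) it
   gives F_g(x_1) F_g(S x_2) = p_x(g) (x) 1 and
   F_g(x_1) F_g(y_1) F_g(S(x_2 y_2)) = q_{x,y}(g) (x) 1, where p(g), q(g) are
   p, q formed with g in place of t.  Hence w = X_{x_1} X_{S x_2} satisfies
   delta_T(w) = w (x) 1 (it is coinvariant) and mu(w) = p_x (x) 1, and likewise
   for q. *)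

From HB Require Import structures.
From mathcomp Require Import all_boot all_order all_algebra.
From mathcomp Require Import finmap.
From mathcomp.multinomials Require Import monalg.

Set Implicit Arguments.
Unset Strict Implicit.
Unset Printing Implicit Defensive.

Import GRing.Theory.
Local Open Scope ring_scope.

Local Notation is_bilinear G := (bilinear_for *:%R *:%R G).

Section LinearMaps.
Variable k : fieldType.
Implicit Types U V W : lmodType k.

Lemma linearZ_for U W (L : U -> W) : linear L -> forall a u, L (a *: u) = a *: L u.
Proof. by move=> hL a u; apply: scalable_linear. Qed.

Lemma linear_sum_for U W (L : U -> W) (T : Type) (r : seq T) (F : T -> U) :
  linear L -> L (\sum_(t <- r) F t) = \sum_(t <- r) L (F t).
Proof.
move=> hL; pose L' : {linear U -> W} := HB.pack L (GRing.isLinear.Build _ _ _ _ L hL).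
exact: (linear_sum L').
Qed.

Lemma linear_comp U V W (L1 : V -> W) (L2 : U -> V) :
  linear L1 -> linear L2 -> linear (fun u => L1 (L2 u)).
Proof. by move=> h1 h2 a u v; rewrite h2 h1. Qed.

Lemma linear_id U : linear (fun u : U => u).
Proof. by []. Qed.

Section Extension.
Context {J : choiceType} {W : lmodType k}.
Implicit Types (f g : J -> W) (v : {malg k[J]}).

Lemma extEw f v (d : {fset J}) :
  (msupp v `<=` d)%fset -> ext f v = \sum_(j <- d) v@_j *: f j.
Proof.
move=> le; rewrite /ext (big_fset_incl _ le) //= => x _ /mcoeff_outdom ->.
by rewrite scale0r.
Qed.

Lemma ext_is_linear f : linear (ext f).
Proof.
move=> a u v; set d := (msupp u `|` msupp v)%fset.
rewrite (@extEw f (a *: u + v) d); last first.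
  apply: fsubset_trans (msuppD_le _ _) _; exact: fsetSU (msuppZ_le _ _).
rewrite (@extEw f u d) ?fsubsetUl // (@extEw f v d) ?fsubsetUr //.
rewrite scaler_sumr -big_split /=; apply: eq_bigr => j _.
by rewrite mcoeffD mcoeffZ scalerDl scalerA.
Qed.

Lemma ext_bv f j : ext f (bv j) = f j.
Proof.
by rewrite (@extEw f _ [fset j]%fset) ?msuppU_le // big_seq_fset1 mcoeffUU scale1r.
Qed.

Lemma eq_ext f g v : (forall j, f j = g j) -> ext f v = ext g v.
Proof. by move=> efg; apply: eq_bigr => j _; rewrite efg. Qed.

Lemma ext_scale_add f g a v :
  ext (fun j => a *: f j + g j) v = a *: ext f v + ext g v.
Proof.
rewrite /ext scaler_sumr -big_split; apply: eq_bigr => j _.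
by rewrite scalerDr !scalerA mulrC.
Qed.

Lemma ext_scale f a v : ext (fun j => a *: f j) v = a *: ext f v.
Proof.
by rewrite /ext scaler_sumr; apply: eq_bigr => j _; rewrite !scalerA mulrC.
Qed.

Lemma ext_bvE v : ext bv v = v.
Proof.
rewrite {2}(monalgE v) /ext; apply: eq_bigr => j _.
by apply/malgP => m; rewrite mcoeffZ !mcoeffU; case: eqP; rewrite ?mulr1 ?mulr0.
Qed.

End Extension.

Lemma linear_ext_param {J : choiceType} U W (F : U -> J -> W) v :
  (forall j, linear (F ^~ j)) -> linear (fun u => ext (F u) v).
Proof. by move=> hF a u u'; rewrite -ext_scale_add; apply: eq_ext => j; apply: hF. Qed.

Lemma linear_ext_comp {J : choiceType} V W (L : V -> W) (f : J -> V) v :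
  linear L -> L (ext f v) = ext (fun j => L (f j)) v.
Proof. by move=> hL; rewrite linear_sum_for //; apply: eq_bigr => j _; rewrite linearZ_for. Qed.

Lemma linear_basis_eq {J : choiceType} W (L1 L2 : {malg k[J]} -> W) v :
  linear L1 -> linear L2 -> (forall j, L1 (bv j) = L2 (bv j)) -> L1 v = L2 v.
Proof.
by move=> h1 h2 e; rewrite -(ext_bvE v) !linear_ext_comp //; apply: eq_ext.
Qed.

Lemma bilinear_basis_eq {J L : choiceType} W (T1 T2 : {malg k[J]} -> {malg k[L]} -> W) u v :
  is_bilinear T1 -> is_bilinear T2 ->
  (forall j l, T1 (bv j) (bv l) = T2 (bv j) (bv l)) -> T1 u v = T2 u v.
Proof.
move=> [h1 h1'] [h2 h2'] e.
apply: (linear_basis_eq (L1 := T1^~ v) (L2 := T2^~ v)) => // j.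
exact: linear_basis_eq.
Qed.

Lemma ext_exchange {J L : choiceType} W (F : J -> L -> W) u v :
  ext (fun i => ext (F i) u) v = ext (fun j => ext (F^~ j) v) u.
Proof.
rewrite /ext; under eq_bigr do rewrite scaler_sumr.
rewrite exchange_big /=; apply: eq_bigr => j _; rewrite scaler_sumr.
by apply: eq_bigr => i _; rewrite !scalerA mulrC.
Qed.

Section MonoidAlgebra.
Variable N : monomType.

Lemma malg_scalerAr (c : k) (u v : {malg k[N]}) : u * (c *: v) = c *: (u * v).
Proof.
apply/malgP => n.
rewrite mcoeffZ (mcoeffMlw _ (fsubset_refl (msupp u)) (msuppZ_le c v)) mcoeffMl.
rewrite mulr_sumr; apply: eq_bigr => i _; rewrite mulr_sumr; apply: eq_bigr => j _.
by rewrite mcoeffZ mulrnAr mulrCA.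
Qed.

Lemma linear_malg_mull (v : {malg k[N]}) : linear ( *%R^~ v).
Proof. by move=> a u w; rewrite mulrDl scalerAl. Qed.

Lemma linear_malg_mulr (u : {malg k[N]}) : linear ( *%R u).
Proof. by move=> a v w; rewrite mulrDr malg_scalerAr. Qed.

Lemma bv_mul (x y : N) : (bv x * bv y : {malg k[N]}) = bv (mmul x y).
Proof. by rewrite /bv malgM_def fgmulUU mulr1. Qed.

End MonoidAlgebra.

End LinearMaps.

Section Tensors.
Variable k : fieldType.

Lemma tens_is_bilinear {J L : choiceType} :
  is_bilinear (fun (u : {malg k[J]}) (v : {malg k[L]}) => tens u v).
Proof.
split=> [v|u]; first exact: ext_is_linear.
by apply: linear_ext_param => j; apply: ext_is_linear.
Qed.

Lemma linear_tensl {J L : choiceType} (v : {malg k[L]}) :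
  linear (fun u : {malg k[J]} => tens u v).
Proof. exact: tens_is_bilinear.1. Qed.

Lemma linear_tensr {J L : choiceType} (u : {malg k[J]}) :
  linear (fun v : {malg k[L]} => tens u v).
Proof. exact: tens_is_bilinear.2. Qed.

Lemma tens_bv {J L : choiceType} (j : J) (l : L) :
  tens (bv j) (bv l) = bv (j, l) :> {malg k[(J * L)%type]}.
Proof. by rewrite /tens !ext_bv. Qed.

Lemma ext_tens {J L : choiceType} {W : lmodType k} (F : J * L -> W) u v :
  ext F (tens u v) = ext (fun j => ext (fun l => F (j, l)) v) u.
Proof.
rewrite /tens linear_ext_comp; last exact: ext_is_linear.
apply: eq_ext => j; rewrite linear_ext_comp; last exact: ext_is_linear.
by apply: eq_ext => l; rewrite ext_bv.
Qed.

Lemma bilinear_extE {J L : choiceType} {W : lmodType k}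
    (T : {malg k[J]} -> {malg k[L]} -> W) u v :
  is_bilinear T -> T u v = ext (fun j => ext (fun l => T (bv j) (bv l)) v) u.
Proof.
move=> hT; rewrite -(ext_tens (fun p => T (bv p.1) (bv p.2))).
apply: (bilinear_basis_eq (T2 := fun u v => ext _ (tens u v))) => // [|j l].
- by split=> z; apply: linear_comp (ext_is_linear _) _;
    [apply: linear_tensl | apply: linear_tensr].
- by rewrite tens_bv ext_bv.
Qed.

Lemma ext_relabel {J L : choiceType} {W : lmodType k} (F : L -> W) (h : J -> L) w :
  ext F (relabel h w) = ext (fun j => F (h j)) w.
Proof.
rewrite /relabel linear_ext_comp; last exact: ext_is_linear.
by apply: eq_ext => j; rewrite ext_bv.
Qed.

Lemma ext_tmap {J L J' L' : choiceType} {W : lmodType k} (F : J' * L' -> W)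
    (f : {malg k[J]} -> {malg k[J']}) (g : {malg k[L]} -> {malg k[L']}) w :
  ext F (tmap f g w) = ext (fun p => ext F (tens (f (bv p.1)) (g (bv p.2)))) w.
Proof. exact/linear_ext_comp/ext_is_linear. Qed.

Lemma tmap_tens {J L J' L' : choiceType}
    (f : {malg k[J]} -> {malg k[J']}) (g : {malg k[L]} -> {malg k[L']}) u v :
  linear f -> linear g -> tmap f g (tens u v) = tens (f u) (g v).
Proof.
move=> hf hg; apply: (bilinear_basis_eq (T1 := fun u v => tmap f g (tens u v))
                          (T2 := fun u v => tens (f u) (g v))).
- by split=> z; apply: linear_comp (ext_is_linear _) _;
    [apply: linear_tensl | apply: linear_tensr].
- by split=> z; [apply: linear_comp (linear_tensl _) hf
                | apply: linear_comp (linear_tensr _) hg].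
- by move=> j l; rewrite tens_bv /tmap ext_bv.
Qed.

End Tensors.

Section HopfCalculus.
Variables (k : fieldType) (I : choiceType) (A : HopfData k I).
Hypothesis hA : is_hopf A.

Local Notation H := {malg k[I]}.
Local Notation m := (mulH A).
Local Notation S := (antip A).
Local Notation eps := (counit A).
Local Notation one := (h1 A).

(* [\sw_(a, b | x) E] is the Sweedler sum E[x_1/a, x_2/b]. *)
Definition sweedler {W : lmodType k} (G : H -> H -> W) (x : H) : W :=
  ext (fun p : I * I => G (bv p.1) (bv p.2)) (comul A x).

Local Notation "\sw_ ( a , b | x ) E" := (sweedler (fun a b => E) x)
  (at level 41, E at level 41, a name, b name,
   format "'[' \sw_ ( a ,  b  |  x ) '/  '  E ']'").

Lemma linear_mull (v : H) : linear (m ^~ v).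
Proof. exact: ext_is_linear. Qed.

Lemma linear_mulr (u : H) : linear (m u).
Proof. by apply: linear_ext_param => i; apply: ext_is_linear. Qed.

Lemma mul_is_bilinear : is_bilinear m.
Proof. by split; [apply: linear_mull | apply: linear_mulr]. Qed.

Lemma linear_antipode : linear S.
Proof. exact: ext_is_linear. Qed.

Lemma counit_bv i : eps (bv i) = he A i.
Proof. by rewrite /counit msuppU oner_eq0 big_seq_fset1 mcoeffUU mul1r. Qed.

Lemma mul1H x : m one x = x. Proof. by case: hA => _ [/(_ x)[]]. Qed.
Lemma mulH1 x : m x one = x. Proof. by case: hA => _ [/(_ x)[]]. Qed.
Lemma mulHA x y z : m (m x y) z = m x (m y z). Proof. by case: hA => ->. Qed.

Section SweedlerSums.
Variable W : lmodType k.
Implicit Types G : H -> H -> W.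

Lemma linear_sweedler G : linear (sweedler G).
Proof. exact: linear_comp (ext_is_linear _) (ext_is_linear _). Qed.

Lemma linear_sweedler_param (U : lmodType k) (F : U -> H -> H -> W) x :
  (forall a b, linear (fun z => F z a b)) -> linear (fun z => \sw_(a, b | x) F z a b).
Proof. by move=> hF; apply: linear_ext_param => p; apply: hF. Qed.

Lemma sweedler_linear_comp (W' : lmodType k) (L : W -> W') G x :
  linear L -> L (sweedler G x) = \sw_(a, b | x) L (G a b).
Proof. exact: linear_ext_comp. Qed.

Lemma eq_sweedler G G' x : G =2 G' -> sweedler G x = sweedler G' x.
Proof. by move=> e; apply: eq_ext => p; apply: e. Qed.

Lemma sweedler_exchange (F : H -> H -> H -> H -> W) x y :
  \sw_(a, b | x) \sw_(c, d | y) F a b c d = \sw_(c, d | y) \sw_(a, b | x) F a b c d.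
Proof. exact: ext_exchange. Qed.

Lemma sweedlerZ G c x : \sw_(a, b | x) c *: G a b = c *: sweedler G x.
Proof. exact: ext_scale. Qed.

Lemma sweedler_coassoc (T : H -> H -> H -> W) x :
  \sw_(a, b | x) \sw_(c, d | a) T c d b = \sw_(a, b | x) \sw_(c, d | b) T a c d.
Proof.
have [_ [_ [coassoc _]]] := hA.
pose T3 (t : I * (I * I)) := T (bv t.1) (bv t.2.1) (bv t.2.2).
have := congr1 (ext T3) (coassoc x).
rewrite ext_relabel !ext_tmap => e; apply: etrans (etrans e _).
  by apply: eq_ext => p; rewrite ext_tens; apply: eq_ext => q; rewrite ext_bv.
by apply: eq_ext => p; rewrite ext_tens ext_bv.
Qed.

Lemma sweedler_coassoc2 (T : H -> H -> H -> H -> H -> H -> W) x y :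
  \sw_(a, b | x) \sw_(c, d | y) \sw_(a1, a2 | a) \sw_(c1, c2 | c) T a1 a2 c1 c2 b d
  = \sw_(a1, b | x) \sw_(c1, d | y) \sw_(a2, b2 | b) \sw_(c2, d2 | d) T a1 a2 c1 c2 b2 d2.
Proof.
transitivity (\sw_(a, b | x) \sw_(a1, a2 | a) \sw_(c, d | y) \sw_(c1, c2 | c)
                T a1 a2 c1 c2 b d).
  apply: eq_sweedler => a b; exact: sweedler_exchange.
rewrite sweedler_coassoc; apply: eq_sweedler => a b.
transitivity (\sw_(c, d | y) \sw_(c1, c2 | c) \sw_(a2, b2 | b)
                T a a2 c1 c2 b2 d).
  rewrite sweedler_exchange; apply: eq_sweedler => c d; exact: sweedler_exchange.
rewrite sweedler_coassoc; apply: eq_sweedler => c d; exact: sweedler_exchange.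
Qed.

Lemma sweedler_counitl (L : H -> W) x : linear L -> \sw_(a, b | x) eps a *: L b = L x.
Proof.
have [_ [_ [_ [counit _]]]] := hA.
move=> hL; rewrite -[in RHS](counit x).1 /counit_l linear_ext_comp //.
by apply: eq_ext => p; rewrite counit_bv (linearZ_for hL).
Qed.

Lemma sweedler_counitr (L : H -> W) x : linear L -> \sw_(a, b | x) eps b *: L a = L x.
Proof.
have [_ [_ [_ [counit _]]]] := hA.
move=> hL; rewrite -[in RHS](counit x).2 /counit_r linear_ext_comp //.
by apply: eq_ext => p; rewrite counit_bv (linearZ_for hL).
Qed.

Lemma sweedler_mul G x y : is_bilinear G ->
  \sw_(a, b | m x y) G a b = \sw_(a, b | x) \sw_(c, d | y) G (m a c) (m b d).
Proof.
have [_ [_ [_ [_ [[comulM _] _]]]]] := hA.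
move=> hG; rewrite /sweedler comulM /mulHH linear_ext_comp; last exact: ext_is_linear.
apply: eq_ext => p; rewrite linear_ext_comp; last exact: ext_is_linear.
by apply: eq_ext => q; rewrite ext_tens [RHS](bilinear_extE _ _ hG).
Qed.

Lemma sweedler_one G : is_bilinear G -> sweedler G one = G one one.
Proof.
have [_ [_ [_ [_ [[_ comul1] _]]]]] := hA.
by move=> hG; rewrite /sweedler comul1 ext_tens [RHS](bilinear_extE _ _ hG).
Qed.

End SweedlerSums.

Lemma multH_tens u v : multH A (tens u v) = m u v.
Proof. by rewrite /multH ext_tens [RHS]bilinear_extE //; apply: mul_is_bilinear. Qed.

Lemma sweedler_antipodel x : \sw_(a, b | x) m (S a) b = eps x *: one.
Proof.
have [_ [_ [_ [_ [_ [_ antipode]]]]]] := hA.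
rewrite -(antipode x).1 /tmap linear_ext_comp; last exact: ext_is_linear.
by apply: eq_ext => p; rewrite multH_tens.
Qed.

Lemma sweedler_antipoder x : \sw_(a, b | x) m a (S b) = eps x *: one.
Proof.
have [_ [_ [_ [_ [_ [_ antipode]]]]]] := hA.
rewrite -(antipode x).2 /tmap linear_ext_comp; last exact: ext_is_linear.
by apply: eq_ext => p; rewrite multH_tens.
Qed.

Section AntipodeCoproduct.
Variable W : lmodType k.
Implicit Types G : H -> H -> W.

Lemma bilinear_comp_mul G p q :
  is_bilinear G -> is_bilinear (fun a b => G (m a p) (m b q)).
Proof.
by case=> hG1 hG2; split=> z;
  [apply: linear_comp (hG1 _) (linear_mull _) | apply: linear_comp (hG2 _) (linear_mull _)].
Qed.

Lemma sweedler_antipode_nested G v : is_bilinear G ->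
  \sw_(v1, r | v) \sw_(v2, r' | r) \sw_(v3, v4 | r') G (m v1 (S v4)) (m v2 (S v3))
  = eps v *: G one one.
Proof.
move=> [hG1 hG2].
transitivity (\sw_(v1, r | v) G (m v1 (S r)) one).
  apply: eq_sweedler => v1 r.
  rewrite -(sweedler_coassoc (fun a c d => G (m v1 (S d)) (m a (S c)))).
  transitivity (\sw_(a, b | r) eps a *: G (m v1 (S b)) one).
    apply: eq_sweedler => a b.
    by rewrite -(sweedler_linear_comp _ _ (hG2 _)) sweedler_antipoder (linearZ_for (hG2 _)).
  apply: (sweedler_counitl (L := fun z => G (m v1 (S z)) one)).
  exact: linear_comp (hG1 _) (linear_comp (linear_mulr _) linear_antipode).
rewrite -(sweedler_linear_comp (fun a b => m a (S b)) _ (hG1 one)).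
by rewrite sweedler_antipoder (linearZ_for (hG1 _)).
Qed.

Lemma sweedler_antipodel_comul G c : is_bilinear G ->
  \sw_(a, t | c) \sw_(v1, v2 | t) \sw_(e, f | S a) G (m e v1) (m f v2)
  = eps c *: G one one.
Proof.
move=> hG.
transitivity (\sw_(a, t | c) sweedler G (m (S a) t)).
  apply: eq_sweedler => a t; rewrite (sweedler_mul _ _ hG).
  exact: sweedler_exchange.
rewrite -(sweedler_linear_comp _ _ (linear_sweedler G)) sweedler_antipodel.
by rewrite (linearZ_for (linear_sweedler G)) (sweedler_one hG).
Qed.

Lemma sweedler_antipodel_comul_twisted G c r : is_bilinear G ->
  \sw_(a, t | c) \sw_(v1, v2 | t) \sw_(v3, v4 | r) \sw_(e, f | S a)
     G (m e (m v1 (S v4))) (m f (m v2 (S v3)))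
  = eps c *: \sw_(v3, v4 | r) G (S v4) (S v3).
Proof.
move=> hG.
transitivity (\sw_(v3, v4 | r) \sw_(a, t | c) \sw_(v1, v2 | t) \sw_(e, f | S a)
                G (m e (m v1 (S v4))) (m f (m v2 (S v3)))).
  transitivity (\sw_(a, t | c) \sw_(v3, v4 | r) \sw_(v1, v2 | t) \sw_(e, f | S a)
                  G (m e (m v1 (S v4))) (m f (m v2 (S v3)))).
    apply: eq_sweedler => a t.
    exact: (sweedler_exchange (fun v1 v2 v3 v4 => \sw_(e, f | S a)
              G (m e (m v1 (S v4))) (m f (m v2 (S v3)))) t r).
  exact: (sweedler_exchange (fun a t v3 v4 => \sw_(v1, v2 | t) \sw_(e, f | S a)
            G (m e (m v1 (S v4))) (m f (m v2 (S v3)))) c r).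
rewrite -sweedlerZ; apply: eq_sweedler => v3 v4.
pose G' a b := G (m a (S v4)) (m b (S v3)).
transitivity (\sw_(a, t | c) \sw_(v1, v2 | t) \sw_(e, f | S a) G' (m e v1) (m f v2)).
  apply: eq_sweedler => a t; apply: eq_sweedler => v1 v2.
  by apply: eq_sweedler => e f; rewrite /G' !mulHA.
rewrite [LHS](sweedler_antipodel_comul _ (bilinear_comp_mul _ _ hG)).
by rewrite /G' !mul1H.
Qed.

(* The classical computation
   Delta(S u) = Delta(S u_1) (u_2 S u_5 (x) u_3 S u_4) = Delta(S u_1 u_2) (S u_4 (x) S u_3)
              = S u_2 (x) S u_1,
   tested against an arbitrary bilinear G. *)
Lemma sweedler_antipode G u : is_bilinear G ->
  \sw_(a, b | S u) G a b = \sw_(a, b | u) G (S b) (S a).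
Proof.
move=> hG.
have hGS a : is_bilinear (fun p q => \sw_(e, f | S a) G (m e p) (m f q)).
  split=> z; apply: linear_sweedler_param => e f.
    exact: linear_comp (hG.1 _) (linear_mulr _).
  exact: linear_comp (hG.2 _) (linear_mulr _).
transitivity (\sw_(a, b | u) eps b *: sweedler G (S a)).
  symmetry; apply: (sweedler_counitr (L := fun a => sweedler G (S a))).
  exact: linear_comp (linear_sweedler G) linear_antipode.
transitivity (\sw_(a, b | u) \sw_(v1, r | b) \sw_(v2, r' | r) \sw_(v3, v4 | r')
                \sw_(e, f | S a) G (m e (m v1 (S v4))) (m f (m v2 (S v3)))).
  apply: eq_sweedler => a b; rewrite (sweedler_antipode_nested _ (hGS _)).
  by congr (_ *: _); apply: eq_sweedler => e f; rewrite !mulH1.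
transitivity (\sw_(a, b | u) \sw_(t, r' | b) \sw_(v1, v2 | t) \sw_(v3, v4 | r')
                \sw_(e, f | S a) G (m e (m v1 (S v4))) (m f (m v2 (S v3)))).
  apply: eq_sweedler => a b; symmetry.
  exact: (sweedler_coassoc (fun v1 v2 r' => \sw_(v3, v4 | r') \sw_(e, f | S a)
            G (m e (m v1 (S v4))) (m f (m v2 (S v3)))) b).
rewrite -(sweedler_coassoc (fun a t r' => \sw_(v1, v2 | t) \sw_(v3, v4 | r')
            \sw_(e, f | S a) G (m e (m v1 (S v4))) (m f (m v2 (S v3))))).
rewrite -[RHS](sweedler_counitl _ (linear_sweedler (fun a b => G (S b) (S a)))).
by apply: eq_sweedler => c r'; apply: sweedler_antipodel_comul_twisted.
Qed.

Lemma sweedler_antipode_absorb (B : H -> H -> W) z : is_bilinear B ->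
  \sw_(a, b | z) \sw_(c, d | S b) B c (m a d) = B (S z) one.
Proof.
move=> [hB1 hB2].
transitivity (\sw_(a, b | z) \sw_(c, d | b) B (S d) (m a (S c))).
  apply: eq_sweedler => a b; apply: (sweedler_antipode (G := fun c d => B c (m a d))).
  by split=> w; [apply: hB1 | apply: linear_comp (hB2 _) (linear_mulr _)].
rewrite -(sweedler_coassoc (fun a c d => B (S d) (m a (S c)))).
transitivity (\sw_(a, d | z) eps a *: B (S d) one).
  apply: eq_sweedler => a d.
  by rewrite -(sweedler_linear_comp _ _ (hB2 _)) sweedler_antipoder (linearZ_for (hB2 _)).
apply: (sweedler_counitl (L := fun w => B (S w) one)).
exact: linear_comp (hB1 _) linear_antipode.
Qed.

End AntipodeCoproduct.

Section MonoidAlgebraTensorH.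
Variable M : monomType.
Local Notation MH := {malg k[(M * I)%type]}.
Local Notation mMH := (@mulMH k I A M).
Local Notation oneMH := (@oneMH k I A M).

Lemma linear_mulMHl (v : MH) : linear (mMH ^~ v).
Proof. exact: ext_is_linear. Qed.

Lemma linear_mulMHr (u : MH) : linear (mMH u).
Proof. by apply: linear_ext_param => p; apply: ext_is_linear. Qed.

Lemma mulMH_tens (s s' : {malg k[M]}) (h h' : H) :
  mMH (tens s h) (tens s' h') = tens (s * s') (m h h').
Proof.
apply: (bilinear_basis_eq (T1 := fun s h => mMH (tens s h) (tens s' h'))
                          (T2 := fun s h => tens (s * s') (m h h'))).
- split=> z; apply: linear_comp (linear_mulMHl _) _; [exact: linear_tensl | exact: linear_tensr].
- split=> z; [apply: linear_comp (linear_tensl _) (linear_malg_mull _)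
             | apply: linear_comp (linear_tensr _) (linear_mull _)].
move=> j l; rewrite tens_bv /mulMH ext_bv /= ext_tens.
rewrite [RHS](bilinear_extE (T := fun s h => tens (bv j * s) (m (bv l) h))) //.
split=> z; [apply: linear_comp (linear_tensl _) (linear_malg_mulr _)
           | apply: linear_comp (linear_tensr _) (linear_mulr _)].
Qed.

Lemma mulMHA_tens (s1 s2 s3 : {malg k[M]}) (h1 h2 h3 : H) :
  mMH (tens s1 h1) (mMH (tens s2 h2) (tens s3 h3))
  = mMH (mMH (tens s1 h1) (tens s2 h2)) (tens s3 h3).
Proof.
transitivity (tens (s1 * (s2 * s3)) (m h1 (m h2 h3))).
  exact: etrans (congr1 (mMH _) (mulMH_tens _ _ _ _)) (mulMH_tens _ _ _ _).
transitivity (tens (s1 * s2 * s3) (m (m h1 h2) h3)).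
  exact (f_equal2 tens (mulrA s1 s2 s3) (esym (mulHA h1 h2 h3))).
exact: esym (etrans (congr1 (mMH^~ _) (mulMH_tens _ _ _ _)) (mulMH_tens _ _ _ _)).
Qed.

Lemma mulMHA : associative mMH.
Proof.
move=> u v w.
apply: (linear_basis_eq (L1 := fun u => mMH u (mMH v w)) (L2 := fun u => mMH (mMH u v) w)).
- exact: linear_mulMHl.
- exact: linear_comp (linear_mulMHl _) (linear_mulMHl _).
case=> j1 l1.
apply: (linear_basis_eq (L1 := fun v => mMH (bv (j1, l1)) (mMH v w))
                        (L2 := fun v => mMH (mMH (bv (j1, l1)) v) w)).
- exact: linear_comp (linear_mulMHr _) (linear_mulMHl _).
- exact: linear_comp (linear_mulMHl _) (linear_mulMHr _).
case=> j2 l2.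
apply: (linear_basis_eq (L1 := fun w => mMH (bv (j1, l1)) (mMH (bv (j2, l2)) w))
                        (L2 := mMH (mMH (bv (j1, l1)) (bv (j2, l2))))).
- exact: linear_comp (linear_mulMHr _) (linear_mulMHr _).
- exact: linear_mulMHr.
case=> j3 l3; rewrite -!tens_bv; exact: mulMHA_tens.
Qed.

Lemma mul1MH : left_id oneMH mMH.
Proof.
move=> u; apply: (linear_basis_eq (L1 := mMH oneMH)) => [||[j l]].
- exact: linear_mulMHr.
- exact: linear_id.
rewrite -tens_bv; move: (bv j) (bv l) => s h.
by rewrite /oneMH mulMH_tens mul1r mul1H.
Qed.

Lemma mulMH1 : right_id oneMH mMH.
Proof.
move=> u; apply: (linear_basis_eq (L1 := mMH^~ oneMH)) => [||[j l]].
- exact: linear_mulMHl.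
- exact: linear_id.
rewrite -tens_bv; move: (bv j) (bv l) => s h.
by rewrite /oneMH mulMH_tens mulr1 mulH1.
Qed.

Lemma foldr_mulMH_cat (s1 s2 : seq MH) :
  foldr mMH oneMH (s1 ++ s2) = mMH (foldr mMH oneMH s1) (foldr mMH oneMH s2).
Proof.
rewrite foldr_cat; elim: s1 => [|u s1 IH] /=; first by rewrite mul1MH.
by rewrite IH (mulMHA u).
Qed.

Definition tensor_lift (F : H -> MH) (w : TensH k I) : MH :=
  ext (fun n : {fmonom I} => foldr mMH oneMH [seq F (bv i) | i <- fmonom_val n]) w.

Lemma linear_tensor_lift F : linear (tensor_lift F).
Proof. exact: ext_is_linear. Qed.

Lemma tensor_lift_X F a : linear F -> tensor_lift F (Xvar a) = F a.
Proof.
move=> hF; apply: (linear_basis_eq (L1 := fun a => tensor_lift F (Xvar a))).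
- exact: linear_comp (linear_tensor_lift F) (ext_is_linear _).
- exact: hF.
move=> i; rewrite /Xvar ext_bv /tensor_lift ext_bv fmuE /=.
exact: mulMH1.
Qed.

Lemma tensor_lift_mul F u v :
  tensor_lift F (u * v) = mMH (tensor_lift F u) (tensor_lift F v).
Proof.
apply: (bilinear_basis_eq (T1 := fun u v => tensor_lift F (u * v))
                          (T2 := fun u v => mMH (tensor_lift F u) (tensor_lift F v))).
- split=> z; apply: linear_comp (linear_tensor_lift F) _;
    [exact: linear_malg_mull | exact: linear_malg_mulr].
- split=> z; [exact: linear_comp (linear_mulMHl _) (linear_tensor_lift F)
             | exact: linear_comp (linear_mulMHr _) (linear_tensor_lift F)].
move=> n1 n2; rewrite bv_mul /tensor_lift !ext_bv fmM map_cat.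
exact: foldr_mulMH_cat.
Qed.

Lemma tensor_lift_X2 F a c : linear F ->
  tensor_lift F (Xvar a * Xvar c) = mMH (F a) (F c).
Proof.
move=> hF; apply: etrans (tensor_lift_mul _ _ _) _.
exact: f_equal2 (tensor_lift_X _ hF) (tensor_lift_X _ hF).
Qed.

Lemma tensor_lift_X3 F a c e : linear F ->
  tensor_lift F (Xvar a * Xvar c * Xvar e) = mMH (mMH (F a) (F c)) (F e).
Proof.
move=> hF; apply: etrans (tensor_lift_mul _ _ _) _.
exact: f_equal2 (tensor_lift_X2 _ _ hF) (tensor_lift_X _ hF).
Qed.

End MonoidAlgebraTensorH.

Section ComultiplicationMap.
Variables (M : monomType) (g : H -> {malg k[M]}).
Hypothesis hg : linear g.
Local Notation MH := {malg k[(M * I)%type]}.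
Local Notation mMH := (@mulMH k I A M).

(* F_g; [mu] and [deltaT] are convertible to [tensor_lift (comul_map g)] for
   g = tvar resp. g = Xvar. *)
Definition comul_map (a : H) : MH := \sw_(c, d | a) tens (g c) d.

Definition p_of (x : H) : {malg k[M]} := \sw_(a, b | x) g a * g (S b).

Definition q_of (x y : H) : {malg k[M]} :=
  \sw_(a, b | x) \sw_(c, d | y) g a * g c * g (S (m b d)).

Lemma linear_comul_map : linear comul_map.
Proof. exact: linear_sweedler. Qed.

Lemma comul_map_mul a c : mMH (comul_map a) (comul_map c) =
  \sw_(a1, a2 | a) \sw_(c1, c2 | c) tens (g a1 * g c1) (m a2 c2).
Proof.
rewrite (sweedler_linear_comp _ _ (linear_mulMHl _)); apply: eq_sweedler => a1 a2.
rewrite (sweedler_linear_comp _ _ (linear_mulMHr _)); apply: eq_sweedler => c1 c2.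
exact: mulMH_tens.
Qed.

Lemma comul_map_absorb s z :
  \sw_(a, b | z) mMH (tens s a) (comul_map (S b)) = tens (s * g (S z)) one.
Proof.
transitivity (\sw_(a, b | z) \sw_(c, d | S b) tens (s * g c) (m a d)).
  apply: eq_sweedler => a b.
  rewrite (sweedler_linear_comp _ _ (linear_mulMHr _)); apply: eq_sweedler => c d.
  exact: mulMH_tens.
apply: (sweedler_antipode_absorb (B := fun c h => tens (s * g c) h)).
split=> w; first exact: linear_comp (linear_tensl _) (linear_comp (linear_malg_mulr _) hg).
exact: linear_tensr.
Qed.

Lemma bilinear_absorb s :
  is_bilinear (fun z w => mMH (tens s z) (comul_map (S w))).
Proof.
split=> w; first exact: linear_comp (linear_mulMHl _) (linear_tensr _).
exact: linear_comp (linear_mulMHr _) (linear_comp linear_comul_map linear_antipode).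
Qed.

Lemma comul_map_p x :
  \sw_(a, b | x) mMH (comul_map a) (comul_map (S b)) = tens (p_of x) one.
Proof.
transitivity (\sw_(a, b | x) \sw_(a1, a2 | a) mMH (tens (g a1) a2) (comul_map (S b))).
  apply: eq_sweedler => a b.
  exact: (sweedler_linear_comp _ _ (linear_mulMHl _)).
rewrite sweedler_coassoc.
transitivity (\sw_(a, b | x) tens (g a * g (S b)) one).
  apply: eq_sweedler => a b; exact: comul_map_absorb.
exact: esym (sweedler_linear_comp _ _ (linear_tensl one)).
Qed.

Lemma comul_map_q x y :
  \sw_(a, b | x) \sw_(c, d | y)
     mMH (mMH (comul_map a) (comul_map c)) (comul_map (S (m b d)))
  = tens (q_of x y) one.
Proof.
transitivity (\sw_(a, b | x) \sw_(c, d | y) \sw_(a1, a2 | a) \sw_(c1, c2 | c)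
   mMH (tens (g a1 * g c1) (m a2 c2)) (comul_map (S (m b d)))).
  apply: eq_sweedler => a b; apply: eq_sweedler => c d.
  rewrite comul_map_mul (sweedler_linear_comp _ _ (linear_mulMHl _)).
  apply: eq_sweedler => a1 a2; exact: (sweedler_linear_comp _ _ (linear_mulMHl _)).
rewrite sweedler_coassoc2.
transitivity (\sw_(a, b | x) \sw_(c, d | y) tens (g a * g c * g (S (m b d))) one).
  apply: eq_sweedler => a b; apply: eq_sweedler => c d.
  rewrite -(sweedler_mul _ _ (bilinear_absorb _)); exact: comul_map_absorb.
rewrite (sweedler_linear_comp _ _ (linear_tensl one)); apply: eq_sweedler => a b.
exact: esym (sweedler_linear_comp _ _ (linear_tensl one)).
Qed.

End ComultiplicationMap.

Section TensorLiftOfCoinvariants.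
Variables (M : monomType) (g : H -> {malg k[M]}).
Hypothesis hg : linear g.
Local Notation X := (@Xvar k I).

Lemma tensor_lift_p x :
  tensor_lift (comul_map g) (p_of X x) = tens (p_of g x) one.
Proof.
rewrite -(comul_map_p hg) /p_of (sweedler_linear_comp _ _ (linear_tensor_lift _)).
apply: eq_sweedler => a b; exact: tensor_lift_X2 (linear_comul_map _).
Qed.

Lemma tensor_lift_q x y :
  tensor_lift (comul_map g) (q_of X x y) = tens (q_of g x y) one.
Proof.
rewrite -(comul_map_q hg) /q_of (sweedler_linear_comp _ _ (linear_tensor_lift _)).
apply: eq_sweedler => a b.
rewrite (sweedler_linear_comp _ _ (linear_tensor_lift _)); apply: eq_sweedler => c d.
exact: tensor_lift_X3 (linear_comul_map _).
Qed.

End TensorLiftOfCoinvariants.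

End HopfCalculus.

Lemma coinvT_of_deltaT (k : fieldType) (I : choiceType) (A : HopfData k I) w :
  deltaT A w = tens w (h1 A) -> coinvT A w.
Proof.
move=> eq_delta; rewrite /coinvT.
transitivity (tmap (mu A) id (tens w (h1 A))); first exact: congr1 _ eq_delta.
exact (tmap_tens w (h1 A) (ext_is_linear _) (@linear_id k _)).
Qed.

Theorem lemma5p1 (k : fieldType) (I : choiceType) (A : HopfData k I)
  (hA : is_hopf A) (x y : {malg k[I]}) :
  in_mubar_VH A (tens (p_el A x) (h1 A))
  /\ in_mubar_VH A (tens (q_el A x y) (h1 A)).
Proof.
have linX : linear (@Xvar k I) := ext_is_linear _.
have lint : linear (@tvar k I) := ext_is_linear _.
split.
- exists (p_of A (@Xvar k I) x); split.
  + exact/coinvT_of_deltaT/(tensor_lift_p hA linX).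
  + exact: (tensor_lift_p hA lint).
- exists (q_of A (@Xvar k I) x y); split.
  + exact/coinvT_of_deltaT/(tensor_lift_q hA linX).
  + exact: (tensor_lift_q hA lint).
Qed.
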